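(* Under the standing assumptions below, let $\pi\in\Pi$, let $\delta>0$, and let $\tilde\pi$ be an optimal solution of the trust-region subproblem $$\max_{\pi'\in\Pi} L_{\pi}(\pi')\quad\text{s.t.}\quad \sum_{s}\rho_{\pi}(s)\,D_{TV}(\pi(\cdot|s)\,\|\,\pi'(\cdot|s))\le\delta.$$ Then $$L_{\pi}(\tilde\pi)-L_{\pi}(\pi)\ \ge\ \min\bigl(1,(1-\gamma)\delta\bigr)\,\mathbb A^*_{\pi}.$$
   Context: Consider an infinite-horizon discounted Markov decision process $(\mathcal S,\mathcal A,P,r,\rho_0,\gamma)$ with finite state space $\mathcal S$, finite action space $\mathcal A$, transition probabilities $P(s'|s,a)$, bounded reward function $r:\mathcal S\times\mathcal A\to\mathbb R$, initial-state distribution $\rho_0$ with $\rho_0(s)>0$ for all $s\in\mathcal S$, and discount factor $\gamma\in(0,1)$. A policy $\pi$ assigns to each state $s$ a probability distribution $\pi(\cdot|s)$ on $\mathcal A$; $\Pi$ denotes the set of all policies. The total expected reward is $\eta(\pi)=\mathbb E_\pi[\sum_{t=0}^\infty\gamma^t r(s_t,a_t)]$, where $s_0\sim\rho_0$, $a_t\sim\pi(\cdot|s_t)$, $s_{t+1}\sim P(\cdot|s_t,a_t)$. The unnormalized discounted visitation frequency is $\rho_\pi(s)=\sum_{t=0}^\infty\gamma^t\mathbb P(s_t=s\mid\pi)$. $Q_\pi(s,a)=\mathbb E_\pi[\sum_{l\ge0}\gamma^l r(s_l,a_l)\mid s_0=s,a_0=a]$, $V_\pi(s)=\mathbb E_\pi[\sum_{l\ge0}\gamma^l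 r(s_l,a_l)\mid s_0=s]$, and the advantage is $A_\pi(s,a)=Q_\pi(s,a)-V_\pi(s)$. The surrogate function is $L_\pi(\tilde\pi)=\eta(\pi)+\sum_s\rho_\pi(s)\sum_a\tilde\pi(a|s)A_\pi(s,a)$. The policy advantage of $\pi'$ with respect to $\pi$ is $\mathbb A_\pi(\pi')=\sum_s\rho_\pi(s)\sum_a\pi'(a|s)A_\pi(s,a)$, and $\mathbb A^*_\pi=\max_{\pi'\in\Pi}\mathbb A_\pi(\pi')$. The total variation distance is $D_{TV}(p\|q)=\frac12\sum_x|p(x)-q(x)|$. *)

From Stdlib Require Import Reals Lra.
Open Scope R_scope.

(* States are 0..nS-1, actions are 0..nA-1 (finite spaces).
   MDP data: P s a s' = P(s'|s,a), r s a, rho0 s; a policy pi s a = pi(a|s). *)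

Fixpoint fsum (n : nat) (f : nat -> R) : R :=
  match n with
  | O => 0
  | S m => fsum m f + f m
  end.

Definition is_mdp (nS nA : nat) (P : nat -> nat -> nat -> R)
  (rho0 : nat -> R) : Prop :=
  (0 < nS)%nat /\ (0 < nA)%nat /\
  (forall s a s', (s < nS)%nat -> (a < nA)%nat -> (s' < nS)%nat -> 0 <= P s a s') /\
  (forall s a, (s < nS)%nat -> (a < nA)%nat -> fsum nS (fun s' => P s a s') = 1) /\
  (forall s, (s < nS)%nat -> 0 < rho0 s) /\
  fsum nS rho0 = 1.

Definition is_policy (nS nA : nat) (pi : nat -> nat -> R) : Prop :=
  (forall s a, (s < nS)%nat -> (a < nA)%nat -> 0 <= pi s a) /\
  (forall s, (s < nS)%nat -> fsum nA (fun a => pi s a) = 1).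

(* Joint law of (s_t, a_t) under policy pi, started from the state-action
   law mu of (s_0, a_0):  sa_law t s a = P(s_t = s, a_t = a). *)
Fixpoint sa_law (nS nA : nat) (P : nat -> nat -> nat -> R) (pi : nat -> nat -> R)
  (mu : nat -> nat -> R) (t : nat) : nat -> nat -> R :=
  match t with
  | O => mu
  | S t' => fun s a =>
      fsum nS (fun s0 => fsum nA (fun a0 =>
        sa_law nS nA P pi mu t' s0 a0 * P s0 a0 s)) * pi s a
  end.

Definition exp_reward (nS nA : nat) (P : nat -> nat -> nat -> R) (r : nat -> nat -> R)
  (pi : nat -> nat -> R) (mu : nat -> nat -> R) (t : nat) : R :=
  fsum nS (fun s => fsum nA (fun a => sa_law nS nA P pi mu t s a * r s a)).

Definition is_disc_return (nS nA : nat) (P : nat -> nat -> nat -> R) (r : nat -> nat -> R)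
  (gamma : R) (pi : nat -> nat -> R) (mu : nat -> nat -> R) (v : R) : Prop :=
  infinite_sum (fun t => gamma ^ t * exp_reward nS nA P r pi mu t) v.

Definition mu_start (rho0 : nat -> R) (pi : nat -> nat -> R) : nat -> nat -> R :=
  fun s a => rho0 s * pi s a.
Definition mu_state (s0 : nat) (pi : nat -> nat -> R) : nat -> nat -> R :=
  fun s a => if Nat.eqb s s0 then pi s a else 0.
Definition mu_sa (s0 a0 : nat) : nat -> nat -> R :=
  fun s a => if andb (Nat.eqb s s0) (Nat.eqb a a0) then 1 else 0.

Definition is_eta nS nA P r rho0 gamma pi (v : R) : Prop :=
  is_disc_return nS nA P r gamma pi (mu_start rho0 pi) v.

Definition is_V nS nA P r gamma pi (V : nat -> R) : Prop :=
  forall s, (s < nS)%nat -> is_disc_return nS nA P r gamma pi (mu_state s pi) (V s).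

Definition is_Q nS nA P r gamma pi (Q : nat -> nat -> R) : Prop :=
  forall s a, (s < nS)%nat -> (a < nA)%nat ->
    is_disc_return nS nA P r gamma pi (mu_sa s a) (Q s a).

(* unnormalized discounted visitation frequency rho_pi(s) = sum_t gamma^t P(s_t=s) *)
Definition is_visitation nS nA P rho0 gamma pi (rho : nat -> R) : Prop :=
  forall s, (s < nS)%nat ->
    infinite_sum (fun t => gamma ^ t *
       fsum nA (fun a => sa_law nS nA P pi (mu_start rho0 pi) t s a)) (rho s).

Definition pol_adv nS nA (rho : nat -> R) (A : nat -> nat -> R) (pi' : nat -> nat -> R) : R :=
  fsum nS (fun s => rho s * fsum nA (fun a => pi' s a * A s a)).

Definition surrogate nS nA (eta : R) (rho : nat -> R) (A : nat -> nat -> R)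
  (pi' : nat -> nat -> R) : R :=
  eta + fsum nS (fun s => rho s * fsum nA (fun a => pi' s a * A s a)).

Definition dtv nA (pi pi' : nat -> nat -> R) (s : nat) : R :=
  / 2 * fsum nA (fun a => Rabs (pi s a - pi' s a)).

Definition exp_dtv nS nA (rho : nat -> R) (pi pi' : nat -> nat -> R) : R :=
  fsum nS (fun s => rho s * dtv nA pi pi' s).

From Stdlib Require Import Reals Lra Lia.
Open Scope R_scope.

(* Let pi* attain A*_pi and mix pi_al := (1 - al) pi + al pi*.  Since
   V_pi(s) = sum_a pi(a|s) Q_pi(s,a), the advantage of pi averages to zero under
   pi itself, so L_pi(pi_al) - L_pi(pi) = al A*_pi.  Statewise
   D_TV(pi(.|s) || pi_al(.|s)) <= al and sum_s rho_pi(s) = 1 / (1 - gamma), so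
   pi_al is feasible for al = min(1, (1 - gamma) delta); optimality of the
   trust-region solution then gives the bound. *)

Lemma fsum_ext n f g : (forall i, (i < n)%nat -> f i = g i) -> fsum n f = fsum n g.
Proof.
  induction n as [|n IH]; intros H; simpl; auto.
  rewrite IH, H; [reflexivity | lia | intros i Hi; apply H; lia].
Qed.

Lemma fsum_const0 n : fsum n (fun _ => 0) = 0.
Proof. induction n as [|n IH]; simpl; [|rewrite IH]; ring. Qed.

Lemma fsum_add n f g : fsum n (fun i => f i + g i) = fsum n f + fsum n g.
Proof. induction n as [|n IH]; simpl; [|rewrite IH]; ring. Qed.

Lemma fsum_scal_l n c f : fsum n (fun i => c * f i) = c * fsum n f.
Proof. induction n as [|n IH]; simpl; [|rewrite IH]; ring. Qed.

Lemma fsum_scal_r n c f : fsum n (fun i => f i * c) = fsum n f * c.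
Proof. induction n as [|n IH]; simpl; [|rewrite IH]; ring. Qed.

Lemma fsum_swap n m f :
  fsum n (fun i => fsum m (fun j => f i j)) = fsum m (fun j => fsum n (fun i => f i j)).
Proof.
  induction n as [|n IH]; simpl.
  - symmetry; apply fsum_const0.
  - rewrite IH, fsum_add. reflexivity.
Qed.

Lemma fsum_le n f g : (forall i, (i < n)%nat -> f i <= g i) -> fsum n f <= fsum n g.
Proof.
  induction n as [|n IH]; intros H; simpl; [lra|].
  apply Rplus_le_compat; [apply IH; intros i Hi|]; apply H; lia.
Qed.

Lemma fsum_ge0 n f : (forall i, (i < n)%nat -> 0 <= f i) -> 0 <= fsum n f.
Proof. intros H. rewrite <- (fsum_const0 n). apply fsum_le, H. Qed.

Lemma fsum_indicator n a f :
  (a < n)%nat -> fsum n (fun b => if Nat.eqb b a then f b else 0) = f a.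
Proof.
  induction n as [|n IH]; intros Ha; simpl; [lia|].
  destruct (Nat.eqb_spec n a) as [->|Hna].
  - rewrite (fsum_ext _ _ (fun _ => 0)), fsum_const0; [ring|].
    intros b Hb. destruct (Nat.eqb_spec b a); [lia|reflexivity].
  - rewrite IH by lia. ring.
Qed.

Lemma infinite_sum_add a b la lb :
  infinite_sum a la -> infinite_sum b lb -> infinite_sum (fun t => a t + b t) (la + lb).
Proof.
  intros Ha Hb. apply (Un_cv_ext (fun n => sum_f_R0 a n + sum_f_R0 b n)).
  - intros n. symmetry; apply plus_sum.
  - exact (CV_plus _ _ _ _ Ha Hb).
Qed.

Lemma infinite_sum_scal c a l : infinite_sum a l -> infinite_sum (fun t => c * a t) (c * l).
Proof.
  intros H. apply (Un_cv_ext (fun n => c * sum_f_R0 a n)).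
  - intros n. rewrite scal_sum. apply sum_eq; intros; ring.
  - apply (continuity_seq (fun x => c * x)); [reg | exact H].
Qed.

Lemma infinite_sum_fsum n f l :
  (forall b, (b < n)%nat -> infinite_sum (f b) (l b)) ->
  infinite_sum (fun t => fsum n (fun b => f b t)) (fsum n l).
Proof.
  induction n as [|n IH]; intros H; simpl.
  - intros eps Heps. exists O. intros k _. unfold Rdist.
    replace (sum_f_R0 (fun _ => 0) k) with 0 by (induction k; simpl; lra).
    rewrite Rminus_0_r, Rabs_R0; lra.
  - apply infinite_sum_add; [apply IH; intros b Hb|]; apply H; lia.
Qed.

Lemma infinite_sum_ge0 a l : (forall t, 0 <= a t) -> infinite_sum a l -> 0 <= l.
Proof. intros Ha H. apply Rle_trans with (a O); [apply Ha | exact (sum_incr a O l H Ha)]. Qed.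

Section Dynamics.

Variables (nS nA : nat) (P : nat -> nat -> nat -> R) (pi : nat -> nat -> R).

Lemma sa_law_linear n (c : nat -> R) (m : nat -> nat -> nat -> R) mu :
  (forall s a, (s < nS)%nat -> (a < nA)%nat -> mu s a = fsum n (fun b => c b * m b s a)) ->
  forall t s a, (s < nS)%nat -> (a < nA)%nat ->
  sa_law nS nA P pi mu t s a = fsum n (fun b => c b * sa_law nS nA P pi (m b) t s a).
Proof.
  intros Hmu t. induction t as [|t IH]; intros s a Hs Ha; simpl; auto.
  assert (Hstep : forall s0, (s0 < nS)%nat ->
    fsum nA (fun a0 => sa_law nS nA P pi mu t s0 a0 * P s0 a0 s)
    = fsum n (fun b => c b *
        fsum nA (fun a0 => sa_law nS nA P pi (m b) t s0 a0 * P s0 a0 s))).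
  { intros s0 Hs0.
    rewrite (fsum_ext nA _ (fun a0 => fsum n (fun b =>
               c b * (sa_law nS nA P pi (m b) t s0 a0 * P s0 a0 s)))).
    - rewrite fsum_swap. apply fsum_ext. intros b _. apply fsum_scal_l.
    - intros a0 Ha0. rewrite IH, <- fsum_scal_r by auto. apply fsum_ext. intros; ring. }
  rewrite (fsum_ext nS _ _ Hstep), fsum_swap, <- fsum_scal_r.
  apply fsum_ext. intros b _. rewrite fsum_scal_l. ring.
Qed.

Lemma exp_reward_linear r n (c : nat -> R) (m : nat -> nat -> nat -> R) mu :
  (forall s a, (s < nS)%nat -> (a < nA)%nat -> mu s a = fsum n (fun b => c b * m b s a)) ->
  forall t, exp_reward nS nA P r pi mu t = fsum n (fun b => c b * exp_reward nS nA P r pi (m b) t).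
Proof.
  intros Hmu t. unfold exp_reward.
  rewrite (fsum_ext nS _ (fun s => fsum n (fun b => c b *
             fsum nA (fun a => sa_law nS nA P pi (m b) t s a * r s a)))).
  - rewrite fsum_swap. apply fsum_ext. intros b _. apply fsum_scal_l.
  - intros s Hs.
    rewrite (fsum_ext nA _ (fun a => fsum n (fun b =>
               c b * (sa_law nS nA P pi (m b) t s a * r s a)))).
    + rewrite fsum_swap. apply fsum_ext. intros b _. apply fsum_scal_l.
    + intros a Ha. rewrite (sa_law_linear n c m mu Hmu) by auto.
      rewrite <- fsum_scal_r. apply fsum_ext. intros; ring.
Qed.

(* Starting in s0 and then following pi is the pi(.|s0)-mixture of starting at
   (s0, b); linearity of the return in the initial law does the rest. *)
Lemma value_avg_action_value r gamma V Q s0 :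
  is_V nS nA P r gamma pi V -> is_Q nS nA P r gamma pi Q -> (s0 < nS)%nat ->
  V s0 = fsum nA (fun b => pi s0 b * Q s0 b).
Proof.
  intros HV HQ Hs0.
  assert (Hmu : forall s a, (s < nS)%nat -> (a < nA)%nat ->
            mu_state s0 pi s a = fsum nA (fun b => pi s0 b * mu_sa s0 b s a)).
  { intros s a Hs Ha. unfold mu_state, mu_sa.
    destruct (Nat.eqb_spec s s0) as [->|]; simpl.
    - rewrite <- (fsum_indicator nA a (fun b => pi s0 b)) at 1 by exact Ha.
      apply fsum_ext. intros b _. destruct (Nat.eqb_spec a b), (Nat.eqb_spec b a);
        subst; try lia; ring.
    - rewrite (fsum_ext nA _ (fun _ => 0)), fsum_const0 by (intros; ring). reflexivity. }
  apply (uniqueness_sum (fun t => gamma ^ t * exp_reward nS nA P r pi (mu_state s0 pi) t));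
    [now apply HV|].
  apply (Un_cv_ext (sum_f_R0 (fun t => fsum nA (fun b =>
           pi s0 b * (gamma ^ t * exp_reward nS nA P r pi (mu_sa s0 b) t))))).
  - intros n. apply sum_eq. intros t _.
    rewrite (exp_reward_linear r nA _ _ _ Hmu), <- fsum_scal_l.
    apply fsum_ext. intros; ring.
  - apply infinite_sum_fsum. intros b Hb. apply infinite_sum_scal. now apply HQ.
Qed.

Hypothesis HP_ge0 : forall s a s', (s < nS)%nat -> (a < nA)%nat -> (s' < nS)%nat -> 0 <= P s a s'.
Hypothesis HP_mass : forall s a, (s < nS)%nat -> (a < nA)%nat -> fsum nS (fun s' => P s a s') = 1.
Hypothesis Hpi : is_policy nS nA pi.

Lemma sa_law_ge0 mu :
  (forall s a, (s < nS)%nat -> (a < nA)%nat -> 0 <= mu s a) ->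
  forall t s a, (s < nS)%nat -> (a < nA)%nat -> 0 <= sa_law nS nA P pi mu t s a.
Proof.
  destruct Hpi as [Hpi0 _]. intros Hmu t.
  induction t as [|t IH]; intros s a Hs Ha; simpl; auto.
  apply Rmult_le_pos; auto.
  apply fsum_ge0; intros s0 Hs0. apply fsum_ge0; intros a0 Ha0. apply Rmult_le_pos; auto.
Qed.

Lemma sa_law_mass mu t :
  fsum nS (fun s => fsum nA (fun a => sa_law nS nA P pi mu t s a))
  = fsum nS (fun s => fsum nA (fun a => mu s a)).
Proof.
  destruct Hpi as [_ Hpi1]. induction t as [|t IH]; simpl; auto.
  rewrite <- IH.
  rewrite (fsum_ext nS _ (fun s => fsum nS (fun s0 => fsum nA (fun a0 =>
             sa_law nS nA P pi mu t s0 a0 * P s0 a0 s)))).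
  - rewrite fsum_swap. apply fsum_ext. intros s0 Hs0.
    rewrite fsum_swap. apply fsum_ext. intros a0 Ha0.
    rewrite fsum_scal_l, HP_mass by auto. ring.
  - intros s Hs. rewrite fsum_scal_l, Hpi1 by auto. ring.
Qed.

End Dynamics.

Section Visitation.

Variables (nS nA : nat) (P : nat -> nat -> nat -> R) (rho0 : nat -> R) (gamma : R).
Variables (pi : nat -> nat -> R) (rho : nat -> R).
Hypothesis Hmdp : is_mdp nS nA P rho0.
Hypothesis Hpi : is_policy nS nA pi.
Hypothesis Hrho : is_visitation nS nA P rho0 gamma pi rho.

Lemma visitation_ge0 : 0 <= gamma -> forall s, (s < nS)%nat -> 0 <= rho s.
Proof.
  destruct Hmdp as (_ & _ & HP0 & _ & Hrho0 & _). destruct Hpi as [Hpi0 _].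
  intros Hgamma s Hs. eapply infinite_sum_ge0; [|now apply Hrho].
  intros t. apply Rmult_le_pos; [now apply pow_le|].
  apply fsum_ge0; intros a Ha. apply (sa_law_ge0 nS nA); auto.
  intros s' a' Hs' Ha'. apply Rmult_le_pos; [apply Rlt_le|]; auto.
Qed.

Lemma visitation_mass : 0 <= gamma < 1 -> fsum nS rho = / (1 - gamma).
Proof.
  destruct Hmdp as (_ & _ & _ & HP1 & _ & Hrho1). destruct Hpi as [_ Hpi1].
  intros Hgamma.
  apply (uniqueness_sum (fun t => fsum nS (fun s => gamma ^ t *
           fsum nA (fun a => sa_law nS nA P pi (mu_start rho0 pi) t s a)))).
  - apply infinite_sum_fsum. intros; now apply Hrho.
  - apply (Un_cv_ext (sum_f_R0 (fun t => 1 * gamma ^ t))).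
    + intros n. apply sum_eq. intros t _.
      rewrite fsum_scal_l, (sa_law_mass nS nA P pi HP1 Hpi). unfold mu_start.
      rewrite (fsum_ext nS _ rho0), Hrho1; [ring|].
      intros s Hs. rewrite fsum_scal_l, Hpi1 by exact Hs. ring.
    + apply GP_infinite. rewrite Rabs_right; lra.
Qed.

End Visitation.

Section Mixture.

Variables (nS nA : nat) (rho : nat -> R) (A : nat -> nat -> R).

Definition mix_policy (al : R) (pi pi' : nat -> nat -> R) : nat -> nat -> R :=
  fun s a => (1 - al) * pi s a + al * pi' s a.

Lemma mix_policy_is_policy al pi pi' : 0 <= al <= 1 ->
  is_policy nS nA pi -> is_policy nS nA pi' -> is_policy nS nA (mix_policy al pi pi').
Proof.
  intros Hal [Hpi0 Hpi1] [Hpi'0 Hpi'1]. unfold mix_policy. split.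
  - intros s a Hs Ha. pose proof (Hpi0 s a Hs Ha). pose proof (Hpi'0 s a Hs Ha).
    apply Rplus_le_le_0_compat; apply Rmult_le_pos; lra.
  - intros s Hs. rewrite fsum_add, !fsum_scal_l, Hpi1, Hpi'1 by exact Hs. ring.
Qed.

Lemma pol_adv_mix al pi pi' :
  pol_adv nS nA rho A (mix_policy al pi pi')
  = (1 - al) * pol_adv nS nA rho A pi + al * pol_adv nS nA rho A pi'.
Proof.
  unfold pol_adv, mix_policy. rewrite <- !fsum_scal_l, <- fsum_add.
  apply fsum_ext. intros s _.
  rewrite (fsum_ext nA _ (fun a => (1 - al) * (pi s a * A s a) + al * (pi' s a * A s a)))
    by (intros; ring).
  rewrite fsum_add, !fsum_scal_l. ring.
Qed.

Lemma dtv_mix_le al pi pi' s : 0 <= al -> (s < nS)%nat ->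
  is_policy nS nA pi -> is_policy nS nA pi' -> dtv nA pi (mix_policy al pi pi') s <= al.
Proof.
  intros Hal Hs [Hpi0 Hpi1] [Hpi'0 Hpi'1]. unfold dtv, mix_policy.
  apply Rle_trans with (/ 2 * fsum nA (fun a => al * (pi s a + pi' s a))).
  - apply Rmult_le_compat_l; [lra|]. apply fsum_le. intros a Ha.
    replace (pi s a - ((1 - al) * pi s a + al * pi' s a)) with (al * (pi s a - pi' s a))
      by ring.
    rewrite Rabs_mult, (Rabs_right al) by lra. apply Rmult_le_compat_l; [lra|].
    pose proof (Hpi0 s a Hs Ha). pose proof (Hpi'0 s a Hs Ha).
    unfold Rabs; destruct (Rcase_abs _); lra.
  - rewrite fsum_scal_l, fsum_add, Hpi1, Hpi'1 by exact Hs. lra.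
Qed.

Lemma exp_dtv_mix_le al pi pi' : 0 <= al ->
  (forall s, (s < nS)%nat -> 0 <= rho s) ->
  is_policy nS nA pi -> is_policy nS nA pi' ->
  exp_dtv nS nA rho pi (mix_policy al pi pi') <= al * fsum nS rho.
Proof.
  intros Hal Hrho0 Hpi Hpi'. unfold exp_dtv. rewrite Rmult_comm, <- fsum_scal_r.
  apply fsum_le. intros s Hs. apply Rmult_le_compat_l; [now apply Hrho0|].
  now apply dtv_mix_le.
Qed.

End Mixture.

Lemma pol_adv_self_zero nS nA P r gamma pi rho V Q :
  is_policy nS nA pi -> is_V nS nA P r gamma pi V -> is_Q nS nA P r gamma pi Q ->
  pol_adv nS nA rho (fun s a => Q s a - V s) pi = 0.
Proof.
  intros [_ Hpi1] HV HQ. unfold pol_adv. rewrite <- (fsum_const0 nS).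
  apply fsum_ext. intros s Hs.
  rewrite (fsum_ext nA _ (fun a => pi s a * Q s a + - V s * pi s a)) by (intros; ring).
  rewrite fsum_add, fsum_scal_l, Hpi1 by exact Hs.
  rewrite <- (value_avg_action_value nS nA P pi r gamma V Q s HV HQ Hs). ring.
Qed.

Theorem mainTheorem2
  (nS nA : nat) (P : nat -> nat -> nat -> R) (r : nat -> nat -> R)
  (rho0 : nat -> R) (gamma : R)
  (Hmdp : is_mdp nS nA P rho0) (Hgamma : 0 < gamma < 1)
  (pi : nat -> nat -> R) (Hpi : is_policy nS nA pi)
  (eta : R) (rho V : nat -> R) (Q : nat -> nat -> R)
  (Heta : is_eta nS nA P r rho0 gamma pi eta)
  (Hrho : is_visitation nS nA P rho0 gamma pi rho)
  (HV : is_V nS nA P r gamma pi V)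
  (HQ : is_Q nS nA P r gamma pi Q)
  (Astar : R)
  (HAstar :
     (exists pi', is_policy nS nA pi' /\
        pol_adv nS nA rho (fun s a => Q s a - V s) pi' = Astar) /\
     (forall pi', is_policy nS nA pi' ->
        pol_adv nS nA rho (fun s a => Q s a - V s) pi' <= Astar))
  (delta : R) (Hdelta : 0 < delta)
  (pit : nat -> nat -> R)
  (Hpit_pol : is_policy nS nA pit)
  (Hpit_feas : exp_dtv nS nA rho pi pit <= delta)
  (Hpit_opt : forall pi', is_policy nS nA pi' -> exp_dtv nS nA rho pi pi' <= delta ->
      surrogate nS nA eta rho (fun s a => Q s a - V s) pi'
      <= surrogate nS nA eta rho (fun s a => Q s a - V s) pit) :
  surrogate nS nA eta rho (fun s a => Q s a - V s) pit
  - surrogate nS nA eta rho (fun s a => Q s a - V s) pi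
  >= Rmin 1 ((1 - gamma) * delta) * Astar.
Proof.
  destruct HAstar as [[pistar [Hpistar Hadv]] _].
  set (al := Rmin 1 ((1 - gamma) * delta)).
  assert (Hal0 : 0 < al) by (apply Rmin_glb_lt; [lra | apply Rmult_lt_0_compat; lra]).
  assert (Hal1 : al <= 1) by apply Rmin_l.
  assert (Hal2 : al <= (1 - gamma) * delta) by apply Rmin_r.
  set (A := fun s a => Q s a - V s).
  pose proof (pol_adv_self_zero nS nA P r gamma pi rho V Q Hpi HV HQ) as Hself.
  assert (Hrho0 : forall s, (s < nS)%nat -> 0 <= rho s)
    by (apply (visitation_ge0 nS nA P rho0 gamma pi rho Hmdp Hpi Hrho); lra).
  assert (Hmass : fsum nS rho = / (1 - gamma))
    by (apply (visitation_mass nS nA P rho0 gamma pi rho Hmdp Hpi Hrho); lra).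
  assert (Hfeas : exp_dtv nS nA rho pi (mix_policy al pi pistar) <= delta).
  { eapply Rle_trans; [apply exp_dtv_mix_le; auto; lra|].
    rewrite Hmass. apply Rmult_le_reg_r with (1 - gamma); [lra|].
    rewrite Rmult_assoc, Rinv_l by lra. lra. }
  pose proof (Hpit_opt _ (mix_policy_is_policy nS nA al pi pistar ltac:(lra) Hpi Hpistar) Hfeas)
    as Hopt.
  fold A in Hopt, Hadv, Hself |- *.
  change (surrogate nS nA eta rho A ?p) with (eta + pol_adv nS nA rho A p) in *.
  rewrite pol_adv_mix, Hself, Hadv in Hopt. lra.
Qed.
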